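(* Let $f_0\in C^\infty([0,\infty))$ be a monotone solution of \[ f''(y)+\left(\frac{2}{y}-\frac{y}{2}\right)f'(y)-\frac{1}{y^2}\sin(2f(y))=0\ \ (y>0),\qquad f(0)=0,\qquad \lim_{y\to\infty}f(y)\ \text{finite}, \] satisfying $\lVert f_0-\widetilde f_0\rVert\le 5\cdot10^{-4}$ (notation in the context), and let $\mathcal A_0$ denote the differential expression $\mathcal A_0 w=-\frac{1}{\rho}\partial_y(\rho\,\partial_yw)+\frac{2\cos(2f_0(y))}{y^2}w$ with $\rho(y)=y^2e^{-y^2/4}$. For $\lambda\in\mathbb R$ let $W_\lambda$ be the unique solution of the initial value problem $\mathcal A_0W_\lambda=\lambda W_\lambda$ on $(0,\infty)$, $W_\lambda(0)=0$, $W_\lambda'(0)=1$. If $\lambda\le -1$, then $W_\lambda$ has no zeros in $(0,\infty)$.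
   Context: Here $\widetilde f_0(y)=2\arctan\big(\sum_{n=0}^{14}(f_0)_nT_{2n+1}(y/\sqrt{2+y^2})\big)$ with $T_m$ the Chebyshev polynomials of the first kind and coefficients $(f_0)_0,\dots,(f_0)_{14}$ equal to $\frac{268245}{72878},\frac{-3174}{105551},\frac{1897}{97022},\frac{14}{72731},\frac{79}{119383},\frac{4}{66337},\frac{5}{109368},\frac{1}{109045},\frac{1}{204079},\frac{1}{675805},\frac{1}{1400761},\frac{1}{3586839},\frac{1}{7289041},\frac{1}{16940631},\frac{1}{59286294}$; $\lVert f\rVert=\lVert p_1f\rVert_{L^\infty(0,\infty)}+\lVert p_3f'\rVert_{L^\infty(0,\infty)}$ with $p_1(y)=\frac{\sqrt{2+y^2}}{\sqrt2\,y}$, $p_3(y)=\frac{(2+y^2)^{3/2}}{2\sqrt2}$. The initial conditions at the regular singular point $y=0$ mean $W_\lambda(y)=y+o(y)$ as $y\to0$. *)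

From Stdlib Require Import Reals Lra.
From Coquelicot Require Import Coquelicot.
Open Scope R_scope.

(* Chebyshev polynomials of the first kind: T_0 = 1, T_1 = x,
   T_{m+2} = 2 x T_{m+1} - T_m. *)
Fixpoint cheb_pair (m : nat) (x : R) : R * R :=
  match m with
  | O => (1, x)
  | S k => let p := cheb_pair k x in (snd p, 2 * x * snd p - fst p)
  end.
Definition chebT (m : nat) (x : R) : R := fst (cheb_pair m x).

Definition f0_coef (n : nat) : R :=
  match n with
  | 0 => 268245 / 72878
  | 1 => -3174 / 105551
  | 2 => 1897 / 97022
  | 3 => 14 / 72731
  | 4 => 79 / 119383
  | 5 => 4 / 66337
  | 6 => 5 / 109368
  | 7 => 1 / 109045
  | 8 => 1 / 204079
  | 9 => 1 / 675805
  | 10 => 1 / 1400761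
  | 11 => 1 / 3586839
  | 12 => 1 / 7289041
  | 13 => 1 / 16940631
  | 14 => 1 / 59286294
  | _ => 0
  end.

Definition f0_tilde (y : R) : R :=
  2 * atan (sum_f_R0 (fun n => f0_coef n * chebT (2 * n + 1) (y / sqrt (2 + y ^ 2))) 14).

Definition p1 (y : R) : R := sqrt (2 + y ^ 2) / (sqrt 2 * y).
Definition p3 (y : R) : R := (sqrt (2 + y ^ 2)) ^ 3 / (2 * sqrt 2).

(* ||f - g|| <= eps for the norm ||h|| = ||p1 h||_{L^oo(0,oo)} + ||p3 h'||_{L^oo(0,oo)}
   (for the continuous functions at hand, the essential sup is the sup). *)
Definition norm_diff_le (f g : R -> R) (eps : R) : Prop :=
  exists A B : R, A + B <= eps /\
    (forall y, 0 < y -> Rabs (p1 y * (f y - g y)) <= A) /\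
    (forall y, 0 < y -> Rabs (p3 y * (Derive f y - Derive g y)) <= B).

(* f is C^oo on [0,oo): smooth on (0,oo), and every derivative extends
   continuously to 0 (f itself being continuous from the right at 0). *)
Definition smooth_closed_halfline (f : R -> R) : Prop :=
  (forall (n : nat) (y : R), 0 < y -> ex_derive_n f n y) /\
  (forall n : nat, exists l : R, filterlim (Derive_n f n) (at_right 0) (locally l)) /\
  filterlim f (at_right 0) (locally (f 0)).

Definition monotone_halfline (f : R -> R) : Prop :=
  (forall x y, 0 <= x -> x <= y -> f x <= f y) \/
  (forall x y, 0 <= x -> x <= y -> f y <= f x).

Definition profile_solution (f : R -> R) : Prop :=
  (forall y, 0 < y ->
     Derive_n f 2 y + (2 / y - y / 2) * Derive f y - sin (2 * f y) / y ^ 2 = 0) /\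
  f 0 = 0 /\
  exists L : R, filterlim f (Rbar_locally p_infty) (locally L).

Definition rho (y : R) : R := y ^ 2 * exp (- y ^ 2 / 4).

Definition eigen_ode (f0 : R -> R) (lam : R) (W : R -> R) : Prop :=
  forall y, 0 < y ->
    ex_derive W y /\
    ex_derive (fun t => rho t * Derive W t) y /\
    - (1 / rho y) * Derive (fun t => rho t * Derive W t) y
      + 2 * cos (2 * f0 y) / y ^ 2 * W y = lam * W y.

(* initial condition at the regular singular point: W(y) = y + o(y) as y -> 0+ *)
Definition init_cond (W : R -> R) : Prop :=
  filterlim (fun y => W y / y) (at_right 0) (locally 1).

(* Differentiating the profile equation along the scaling y -> a y shows that
   G = s y f0' solves A_0 G = -G, and monotonicity of f0 gives a sign s <> 0
   with G >= 0.  Suppose W = W_lam has a first zero z.  The Wronskian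
   h = rho (G W' - W G') satisfies h' = rho (-1 - lam) G W >= 0 on (0, z],
   gets arbitrarily small near 0, and h(z) = rho G(z) W'(z) <= 0; hence h = 0
   on (0, z] and G = c W there.  W'(z) = 0 is excluded by uniqueness for the
   linear equation (an energy estimate), so W'(z) < 0; then G'(z) = 0 at the
   minimum z of G forces c = 0.  Thus f0' = 0, so f0 = 0 on (0, z), and
   (rho W')' = rho (2 / y^2 - lam) W >= 0 there gives rho W'(z) >= 0, a
   contradiction. *)

From Stdlib Require Import Reals Lra.
From Coquelicot Require Import Coquelicot.
Open Scope R_scope.

(* [A_0 w = mu w] reads [(rho w')' = rho (2 cos (2 f0) / y^2 - mu) w]. *)
Definition sl_solution (V W : R -> R) : Prop :=
  forall t, 0 < t ->
    ex_derive W t /\ is_derive (fun u => rho u * Derive W u) t (rho t * V t * W t).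

Definition bounded_near_0 (g : R -> R) : Prop :=
  exists M d, 0 < d /\ forall t, 0 < t < d -> Rabs (g t) <= M.

Lemma at_right_0_ball (F : R -> R) l eps :
  filterlim F (at_right 0) (locally l) -> 0 < eps ->
  exists d, 0 < d /\ forall t, 0 < t < d -> Rabs (F t - l) < eps.
Proof.
  intros HF Heps.
  destruct (proj1 (filterlim_locally F l) HF (mkposreal eps Heps)) as [d Hd].
  exists d; split; [apply cond_pos|].
  intros t Ht; apply (Hd t); [|lra].
  unfold ball; simpl; unfold AbsRing_ball, abs, minus, plus, opp; simpl.
  rewrite Ropp_0, Rplus_0_r, Rabs_right; lra.
Qed.

Lemma continuous_ball (F : R -> R) x eps :
  continuous F x -> 0 < eps ->
  exists d, 0 < d /\ forall u, Rabs (u - x) < d -> Rabs (F u - F x) < eps.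
Proof.
  intros HF Heps.
  destruct (proj1 (filterlim_locally F (F x)) HF (mkposreal eps Heps)) as [d Hd].
  exists d; split; [apply cond_pos|]. intros u Hu; exact (Hd u Hu).
Qed.

Lemma bounded_near_0_of_lim (g : R -> R) l :
  filterlim g (at_right 0) (locally l) -> bounded_near_0 g.
Proof.
  intros Hg. destruct (at_right_0_ball g l 1 Hg ltac:(lra)) as [d [Hd Hgd]].
  exists (Rabs l + 1), d; split; [exact Hd|]. intros t Ht.
  specialize (Hgd t Ht).
  replace (g t) with ((g t - l) + l) by ring.
  eapply Rle_trans; [apply Rabs_triang|]. lra.
Qed.

Lemma is_derive_ge0_of_left_max (k : R -> R) z l d :
  0 < d -> is_derive k z l -> (forall t, z - d < t < z -> k t <= k z) -> 0 <= l.
Proof.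
  intros Hd Hk Hmax. apply is_derive_Reals in Hk.
  destruct (Rle_or_lt 0 l) as [|Hl]; [assumption|exfalso].
  destruct (Hk (- l / 2) ltac:(lra)) as [del Hdel].
  set (e := Rmin d del / 2).
  assert (He : 0 < e < d /\ e < del).
  { assert (0 < Rmin d del) by (apply Rmin_glb_lt; [lra|apply cond_pos]).
    pose proof (Rmin_l d del); pose proof (Rmin_r d del); unfold e; lra. }
  specialize (Hdel (- e) ltac:(lra) ltac:(rewrite Rabs_Ropp, Rabs_right; lra)).
  assert (Hq : 0 <= (k (z + - e) - k z) / - e).
  { replace ((k (z + - e) - k z) / - e) with ((k z - k (z + - e)) / e) by (field; lra).
    apply Rdiv_le_0_compat; [|lra]. assert (k (z + - e) <= k z) by (apply Hmax; lra). lra. }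
  apply Rabs_def2 in Hdel. lra.
Qed.

Lemma is_derive_le0_of_left_min (k : R -> R) z l d :
  0 < d -> is_derive k z l -> (forall t, z - d < t < z -> k z <= k t) -> l <= 0.
Proof.
  intros Hd Hk Hmin.
  enough (0 <= - l) by lra.
  apply (is_derive_ge0_of_left_max (fun t => - k t) z _ d Hd (is_derive_opp k z l Hk)).
  intros t Ht. specialize (Hmin t Ht). lra.
Qed.

Lemma nondecreasing_of_derive_ge0 (F dF : R -> R) a b :
  a <= b ->
  (forall t, a <= t <= b -> is_derive F t (dF t)) ->
  (forall t, a <= t <= b -> 0 <= dF t) -> F a <= F b.
Proof.
  intros Hab HF HdF.
  destruct (MVT_gen F a b dF) as [c [Hc Hmvt]];
    rewrite ?Rmin_left, ?Rmax_right in * by lra.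
  - intros t Ht; apply HF; lra.
  - intros t Ht. apply continuity_pt_filterlim.
    apply (ex_derive_continuous (K := R_AbsRing) (V := R_NormedModule)).
    exists (dF t); apply HF; lra.
  - assert (0 <= dF c * (b - a)) by (apply Rmult_le_pos; [apply HdF|]; lra). lra.
Qed.

Lemma eq_of_derive_0 (F : R -> R) a b :
  a <= b -> (forall t, a <= t <= b -> is_derive F t 0) -> F a = F b.
Proof.
  intros Hab HF. apply Rle_antisym.
  - apply (nondecreasing_of_derive_ge0 F (fun _ => 0)); [exact Hab|exact HF|intros; lra].
  - enough (- F a <= - F b) by lra.
    apply (nondecreasing_of_derive_ge0 (fun t => - F t) (fun _ => - 0));
      [exact Hab| |intros; lra].
    intros t Ht; exact (is_derive_opp F t 0 (HF t Ht)).
Qed.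

Lemma ge0_of_nondecreasing_near_0 (F dF : R -> R) b :
  (forall t, 0 < t <= b -> is_derive F t (dF t)) ->
  (forall t, 0 < t <= b -> 0 <= dF t) ->
  (forall eps eta, 0 < eps -> 0 < eta -> exists xi, 0 < xi < eta /\ Rabs (F xi) < eps) ->
  forall t, 0 < t <= b -> 0 <= F t.
Proof.
  intros HF HdF Hsmall t Ht.
  destruct (Rle_or_lt 0 (F t)) as [|Hneg]; [assumption|exfalso].
  destruct (Hsmall (- F t) t ltac:(lra) ltac:(lra)) as [xi [Hxi Hsm]].
  assert (F xi <= F t).
  { apply (nondecreasing_of_derive_ge0 F dF); try lra; intros u Hu; [apply HF|apply HdF]; lra. }
  apply Rabs_def2 in Hsm. lra.
Qed.

Lemma first_zero (W : R -> R) d y :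
  (forall t, 0 < t -> continuous W t) -> 0 < d -> (forall t, 0 < t < d -> 0 < W t) ->
  0 < y -> W y <= 0 ->
  exists z, 0 < z <= y /\ W z = 0 /\ forall t, 0 < t < z -> 0 < W t.
Proof.
  intros HWc Hd Hnear Hy HWy.
  set (E := fun t => 0 < t <= y /\ forall u, 0 < u <= t -> 0 < W u).
  assert (HdE : E (Rmin d y / 2)).
  { assert (0 < Rmin d y) by (apply Rmin_glb_lt; lra).
    pose proof (Rmin_l d y); pose proof (Rmin_r d y).
    split; [lra|]. intros u Hu; apply Hnear; lra. }
  destruct (completeness E) as [z [Hub Hlub]].
  { exists y; intros t [Ht _]; lra. }
  { eexists; exact HdE. }
  assert (Hz : 0 < z <= y).
  { split; [specialize (Hub _ HdE); destruct HdE; lra|].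
    apply Hlub; intros t [Ht _]; lra. }
  assert (Hpos : forall t, 0 < t < z -> 0 < W t).
  { intros t Ht. destruct (Rlt_or_le 0 (W t)) as [|Hle]; [assumption|exfalso].
    enough (z <= t) by lra.
    apply Hlub; intros u [Hu HWu].
    destruct (Rle_or_lt u t) as [|Htu]; [assumption|].
    specialize (HWu t ltac:(lra)); lra. }
  destruct Hz as [Hz0 Hzy].
  exists z; split; [lra|split; [|exact Hpos]].
  destruct (Rtotal_order (W z) 0) as [Hneg|[Hzero|Hgt]]; [exfalso|exact Hzero|exfalso].
  - destruct (continuous_ball W z (- W z) (HWc z Hz0) ltac:(lra)) as [e [He Hball]].
    assert (0 < Rmin e z) by (apply Rmin_glb_lt; lra).
    pose proof (Rmin_l e z); pose proof (Rmin_r e z).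
    set (u := z - Rmin e z / 2).
    specialize (Hball u ltac:(unfold u; rewrite Rabs_left; lra)).
    specialize (Hpos u ltac:(unfold u; lra)).
    apply Rabs_def2 in Hball; lra.
  - destruct (continuous_ball W z (W z) (HWc z Hz0) Hgt) as [e [He Hball]].
    assert (Hzy' : z < y) by (destruct (Req_dec z y) as [->|]; lra).
    pose proof (Rmin_l (z + e / 2) y); pose proof (Rmin_r (z + e / 2) y).
    set (t := Rmin (z + e / 2) y) in *.
    assert (Hzt : z < t) by (apply Rmin_glb_lt; lra).
    assert (HEt : E t).
    { split; [lra|]. intros u Hu.
      destruct (Rlt_or_le u z); [apply Hpos; lra|].
      specialize (Hball u ltac:(rewrite Rabs_right; lra)).
      apply Rabs_def2 in Hball; lra. }
    specialize (Hub t HEt); lra.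
Qed.

Lemma rho_pos t : 0 < t -> 0 < rho t.
Proof. intros Ht. unfold rho. apply Rmult_lt_0_compat; [nra|apply exp_pos]. Qed.

Lemma rho_le_sqr t : rho t <= t ^ 2.
Proof.
  unfold rho.
  assert (Hprod : exp (- t ^ 2 / 4) * exp (t ^ 2 / 4) = 1).
  { rewrite <- exp_plus, <- exp_0. f_equal. field. }
  pose proof (exp_ineq1_le (t ^ 2 / 4)); pose proof (exp_pos (- t ^ 2 / 4)).
  assert (0 <= t ^ 2) by nra. nra.
Qed.

Lemma locally_gt0 t : 0 < t -> locally t (fun u => 0 < u).
Proof. exact (locally_open _ _ (open_gt 0) (fun u Hu => Hu) t). Qed.

Lemma is_derive_rho t : t <> 0 -> is_derive rho t (rho t * (2 / t - t / 2)).
Proof.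
  intros Ht. unfold rho. auto_derive; [exact I|].
  replace (- (t * (t * 1)) * / 4) with (- t ^ 2 / 4) by field. field. exact Ht.
Qed.

Lemma sl_solution_derive2 V W t :
  sl_solution V W -> 0 < t ->
  is_derive (Derive W) t (V t * W t - (2 / t - t / 2) * Derive W t).
Proof.
  intros HW Ht. destruct (HW t Ht) as [_ HQ].
  pose proof (rho_pos t Ht) as Hrho.
  apply (is_derive_ext_loc (fun u => rho u * Derive W u / rho u)).
  { apply (filter_imp (fun u => 0 < u)); [|exact (locally_gt0 t Ht)].
    intros u Hu. change (rho u * Derive W u / rho u = Derive W u).
    field. apply Rgt_not_eq, rho_pos, Hu. }
  replace (V t * W t - (2 / t - t / 2) * Derive W t) with
    ((rho t * V t * W t * rho t - rho t * Derive W t * (rho t * (2 / t - t / 2))) / rho t ^ 2)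
    by (field; lra).
  apply (is_derive_div (fun u => rho u * Derive W u) rho);
    [exact HQ|apply is_derive_rho; lra|lra].
Qed.

(* The [constr_eq] guard skips an occurrence of [Derive F t] that is [l] itself. *)
Ltac rewrite_Derive H :=
  lazymatch type of H with is_derive _ ?t ?l =>
    match goal with |- context [Derive ?F t] =>
      tryif constr_eq (Derive F t) l then fail
      else replace (Derive F t) with l by (symmetry; apply is_derive_unique; exact H)
    end
  end.

Lemma is_derive_cross (a b c d : R -> R) t da db dc dd :
  is_derive a t da -> is_derive b t db -> is_derive c t dc -> is_derive d t dd ->
  is_derive (fun u => a u * b u - c u * d u) t (da * b t + a t * db - (dc * d t + c t * dd)).
Proof.
  intros Ha Hb Hc Hd. auto_derive.
  - repeat split; eexists; eassumption.
  - rewrite_Derive Ha; rewrite_Derive Hb; rewrite_Derive Hc; rewrite_Derive Hd. ring.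
Qed.

Lemma is_derive_sl_wronskian V1 V2 G W t :
  sl_solution V1 G -> sl_solution V2 W -> 0 < t ->
  is_derive (fun u => rho u * (G u * Derive W u - W u * Derive G u)) t
    (rho t * (V2 t - V1 t) * G t * W t).
Proof.
  intros HG HW Ht.
  destruct (HG t Ht) as [HdG HQG]; destruct (HW t Ht) as [HdW HQW].
  apply (is_derive_ext (fun u => G u * (rho u * Derive W u) - W u * (rho u * Derive G u)));
    [intros u; simpl; ring|].
  replace (rho t * (V2 t - V1 t) * G t * W t) with
    (Derive G t * (rho t * Derive W t) + G t * (rho t * V2 t * W t)
     - (Derive W t * (rho t * Derive G t) + W t * (rho t * V1 t * G t))) by ring.
  apply (is_derive_cross G (fun u => rho u * Derive W u) W (fun u => rho u * Derive G u));
    auto; apply Derive_correct; assumption.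
Qed.

Lemma is_derive_energy (p q : R -> R) C t dp dq :
  is_derive p t dp -> is_derive q t dq ->
  is_derive (fun u => (p u ^ 2 + q u ^ 2) * exp (C * u)) t
    ((2 * p t * dp + 2 * q t * dq + C * (p t ^ 2 + q t ^ 2)) * exp (C * t)).
Proof.
  intros Hp Hq. auto_derive.
  - repeat split; eexists; eassumption.
  - rewrite_Derive Hp; rewrite_Derive Hq. ring.
Qed.

Lemma energy_rate_ge0 w w1 v beta K B :
  Rabs v <= K -> Rabs beta <= B ->
  0 <= 2 * w * w1 + 2 * w1 * (v * w - beta * w1) + (1 + K + 2 * B) * (w ^ 2 + w1 ^ 2).
Proof.
  intros [Hv1 Hv2]%Rabs_le_between [Hb1 Hb2]%Rabs_le_between.
  replace (2 * w * w1 + 2 * w1 * (v * w - beta * w1) + (1 + K + 2 * B) * (w ^ 2 + w1 ^ 2))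
    with (((2 + K + v) * (w + w1) ^ 2 + (K - v) * (w - w1) ^ 2) / 2
          + 2 * (B - beta) * w1 ^ 2 + 2 * B * w ^ 2) by field.
  assert (0 <= (2 + K + v) * (w + w1) ^ 2) by (apply Rmult_le_pos; [lra|apply pow2_ge_0]).
  assert (0 <= (K - v) * (w - w1) ^ 2) by (apply Rmult_le_pos; [lra|apply pow2_ge_0]).
  assert (0 <= (B - beta) * w1 ^ 2) by (apply Rmult_le_pos; [lra|apply pow2_ge_0]).
  assert (0 <= B * w ^ 2) by (apply Rmult_le_pos; [lra|apply pow2_ge_0]).
  lra.
Qed.

Lemma div_le_div_l c t a : 0 <= c -> 0 < a <= t -> c / t <= c / a.
Proof.
  intros Hc Ha. unfold Rdiv. apply Rmult_le_compat_l; [exact Hc|].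
  apply Rinv_le_contravar; lra.
Qed.

Lemma sl_solution_backward_uniqueness V W a b K :
  sl_solution V W -> 0 < a <= b -> (forall t, a <= t <= b -> Rabs (V t) <= K) ->
  W b = 0 -> Derive W b = 0 -> W a = 0.
Proof.
  intros HW Hab HV HWb HdWb.
  set (B := 2 / a + b).
  set (C := 1 + K + 2 * B).
  set (E := fun u => (W u ^ 2 + Derive W u ^ 2) * exp (C * u)).
  assert (HE : E a <= E b).
  { apply (nondecreasing_of_derive_ge0 E (fun t =>
      (2 * W t * Derive W t
       + 2 * Derive W t * (V t * W t - (2 / t - t / 2) * Derive W t)
       + C * (W t ^ 2 + Derive W t ^ 2)) * exp (C * t))); [lra| |].
    - intros t Ht. apply is_derive_energy.
      + apply Derive_correct, (HW t ltac:(lra)).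
      + apply sl_solution_derive2; [exact HW|lra].
    - intros t Ht. apply Rmult_le_pos; [|apply Rlt_le, exp_pos].
      apply energy_rate_ge0; [apply HV, Ht|].
      pose proof (div_le_div_l 2 t a ltac:(lra) ltac:(lra)).
      assert (0 < 2 / t) by (apply Rdiv_lt_0_compat; lra).
      apply Rabs_le; unfold B; lra. }
  unfold E in HE. rewrite HWb, HdWb in HE.
  pose proof (exp_pos (C * a)); pose proof (pow2_ge_0 (Derive W a)).
  assert (W a ^ 2 <= 0) by nra. nra.
Qed.

Lemma init_cond_sandwich W :
  init_cond W -> exists d, 0 < d /\ forall t, 0 < t < d -> t / 2 < W t < 3 * t / 2.
Proof.
  intros HW. destruct (at_right_0_ball _ _ (1 / 2) HW ltac:(lra)) as [d [Hd Hball]].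
  exists d; split; [exact Hd|]. intros t Ht.
  specialize (Hball t Ht). apply Rabs_def2 in Hball.
  replace (W t) with (W t / t * t) by (field; lra). split; nra.
Qed.

(* [W'] need not be bounded near [0]; the mean value theorem on [[y/2, y]]
   bounds it at some point. *)
Lemma init_cond_slope_points W :
  init_cond W -> (forall t, 0 < t -> ex_derive W t) ->
  forall eta, 0 < eta ->
  exists xi, 0 < xi < eta /\ Rabs (W xi) <= 2 * xi /\ Rabs (Derive W xi) <= 3.
Proof.
  intros HW HdW eta Heta.
  destruct (init_cond_sandwich W HW) as [d [Hd Hsand]].
  assert (0 < Rmin eta d) by (apply Rmin_glb_lt; lra).
  pose proof (Rmin_l eta d); pose proof (Rmin_r eta d).
  set (y := Rmin eta d / 2) in *.
  assert (Hy : 0 < y < eta /\ y < d) by (unfold y; lra).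
  assert (Hmin : Rmin (y / 2) y = y / 2) by (apply Rmin_left; lra).
  assert (Hmax : Rmax (y / 2) y = y) by (apply Rmax_right; lra).
  destruct (MVT_gen W (y / 2) y (Derive W)) as [xi [Hxi Hmvt]]; rewrite ?Hmin, ?Hmax in *.
  - intros u Hu. apply Derive_correct, HdW. lra.
  - intros u Hu. apply continuity_pt_filterlim.
    apply (ex_derive_continuous (K := R_AbsRing) (V := R_NormedModule)), HdW. lra.
  - pose proof (Hsand y ltac:(lra)); pose proof (Hsand (y / 2) ltac:(lra)).
    pose proof (Hsand xi ltac:(lra)).
    exists xi; split; [lra|split].
    + apply Rabs_le; lra.
    + apply Rabs_le; split; nra.
Qed.

Lemma monotone_derive_sign (f : R -> R) :
  monotone_halfline f -> (forall t, 0 < t -> ex_derive f t) ->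
  exists s, s <> 0 /\ forall t, 0 < t -> 0 <= s * Derive f t.
Proof.
  intros [Hinc|Hdec] Hf; [exists 1|exists (-1)]; split; try lra; intros t Ht.
  - enough (0 <= Derive f t) by lra.
    apply (is_derive_ge0_of_left_max f t _ t Ht (Derive_correct _ _ (Hf t Ht))).
    intros u Hu; apply Hinc; lra.
  - enough (Derive f t <= 0) by lra.
    apply (is_derive_le0_of_left_min f t _ t Ht (Derive_correct _ _ (Hf t Ht))).
    intros u Hu; apply Hdec; lra.
Qed.

Lemma is_derive_scaling (f : R -> R) s t :
  ex_derive (Derive f) t ->
  is_derive (fun u => s * u * Derive f u) t (s * (Derive f t + t * Derive (Derive f) t)).
Proof.
  intros H2. pose proof (Derive_correct _ _ H2) as H2'.
  auto_derive; [exact H2|]. rewrite_Derive H2'. ring.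
Qed.

Lemma scaling_sl_solution (f : R -> R) s :
  (forall t, 0 < t -> ex_derive f t /\ ex_derive (Derive f) t) ->
  (forall t, 0 < t ->
     Derive (Derive f) t + (2 / t - t / 2) * Derive f t - sin (2 * f t) / t ^ 2 = 0) ->
  sl_solution (fun t => 2 * cos (2 * f t) / t ^ 2 + 1) (fun t => s * t * Derive f t).
Proof.
  intros Hf Hode t Ht.
  split; [eexists; apply is_derive_scaling, (Hf t Ht)|].
  (* Eliminating [f''] with the profile equation leaves [rho G'] depending on
     [f] and [f'] only, so no third derivative of [f] is needed. *)
  assert (HdG : forall u, 0 < u -> Derive (fun v => s * v * Derive f v) u
                  = s * ((u ^ 2 / 2 - 1) * Derive f u + sin (2 * f u) / u)).
  { intros u Hu. rewrite_Derive (is_derive_scaling f s u (proj2 (Hf u Hu))).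
    replace (Derive (Derive f) u) with (sin (2 * f u) / u ^ 2 - (2 / u - u / 2) * Derive f u)
      by (pose proof (Hode u Hu); lra).
    field. lra. }
  apply (is_derive_ext_loc
    (fun u => rho u * (s * ((u ^ 2 / 2 - 1) * Derive f u + sin (2 * f u) / u)))).
  { apply (filter_imp (fun u => 0 < u)); [|exact (locally_gt0 t Ht)].
    intros u Hu. cbv beta. rewrite (HdG u Hu). reflexivity. }
  pose proof (Derive_correct _ _ (proj1 (Hf t Ht))) as H1.
  pose proof (Derive_correct _ _ (proj2 (Hf t Ht))) as H2.
  pose proof (is_derive_rho t ltac:(lra)) as Hrho.
  auto_derive.
  - repeat split; try (eexists; eassumption); lra.
  - rewrite_Derive H1; rewrite_Derive H2; rewrite_Derive Hrho.
    replace (Derive (Derive f) t) with (sin (2 * f t) / t ^ 2 - (2 / t - t / 2) * Derive f t)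
      by (pose proof (Hode t Ht); lra).
    field. lra.
Qed.

Lemma scaling_bounded_near_0 (f : R -> R) s :
  (forall t, 0 < t -> ex_derive (Derive f) t) ->
  bounded_near_0 (Derive f) -> bounded_near_0 (Derive (Derive f)) ->
  bounded_near_0 (fun t => s * t * Derive f t) /\
  bounded_near_0 (Derive (fun t => s * t * Derive f t)).
Proof.
  intros Hf [M1 [d1 [Hd1 H1]]] [M2 [d2 [Hd2 H2]]].
  assert (Hd : 0 < Rmin 1 (Rmin d1 d2)) by (repeat apply Rmin_glb_lt; lra).
  pose proof (Rmin_l 1 (Rmin d1 d2)); pose proof (Rmin_r 1 (Rmin d1 d2)).
  pose proof (Rmin_l d1 d2); pose proof (Rmin_r d1 d2).
  set (d := Rmin 1 (Rmin d1 d2)) in *.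
  assert (Hbd : forall t, 0 < t < d ->
                 Rabs (Derive f t) <= M1 /\ Rabs (Derive (Derive f) t) <= M2)
    by (intros t Ht; split; [apply H1|apply H2]; lra).
  assert (HM2 : 0 <= M2).
  { destruct (Hbd (d / 2) ltac:(lra)) as [_ HM2].
    pose proof (Rabs_pos (Derive (Derive f) (d / 2))). lra. }
  pose proof (Rabs_pos s).
  split; exists (Rabs s * (M1 + M2)), d; split; try exact Hd; intros t Ht;
    destruct (Hbd t Ht) as [Hb1 Hb2]; pose proof (Rabs_pos (Derive f t)).
  - rewrite !Rabs_mult, (Rabs_right t), Rmult_assoc by lra.
    apply Rmult_le_compat_l; [lra|]. nra.
  - rewrite_Derive (is_derive_scaling f s t (Hf t ltac:(lra))). rewrite Rabs_mult.
    apply Rmult_le_compat_l; [lra|].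
    eapply Rle_trans; [apply Rabs_triang|]. rewrite Rabs_mult, (Rabs_right t) by lra.
    pose proof (Rabs_pos (Derive (Derive f) t)). nra.
Qed.

Lemma eigen_ode_sl_solution f0 lam W :
  eigen_ode f0 lam W -> sl_solution (fun t => 2 * cos (2 * f0 t) / t ^ 2 - lam) W.
Proof.
  intros HW t Ht. destruct (HW t Ht) as [HdW [HdQ Heq]]. split; [exact HdW|].
  pose proof (rho_pos t Ht).
  replace (rho t * (2 * cos (2 * f0 t) / t ^ 2 - lam) * W t)
    with (Derive (fun u => rho u * Derive W u) t).
  - apply Derive_correct, HdQ.
  - set (D := Derive (fun u => rho u * Derive W u) t) in *.
    replace D with (rho t * (1 / rho t * D)) by (field; lra).
    replace (1 / rho t * D) with (2 * cos (2 * f0 t) / t ^ 2 * W t - lam * W t) by lra.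
    ring.
Qed.

Lemma eq0_of_derive_eq0_near_0 (f : R -> R) z :
  (forall t, 0 < t < z -> is_derive f t 0) -> filterlim f (at_right 0) (locally 0) ->
  forall t, 0 < t < z -> f t = 0.
Proof.
  intros Hf Hf0 t Ht.
  destruct (Req_dec (f t) 0) as [|Hne]; [assumption|exfalso].
  destruct (at_right_0_ball f 0 (Rabs (f t)) Hf0 (Rabs_pos_lt _ Hne)) as [d [Hd Hball]].
  assert (0 < Rmin d t) by (apply Rmin_glb_lt; lra).
  pose proof (Rmin_l d t); pose proof (Rmin_r d t).
  set (u := Rmin d t / 2) in *.
  specialize (Hball u ltac:(unfold u; lra)).
  rewrite Rminus_0_r, (eq_of_derive_0 f u t) in Hball; [lra|unfold u; lra|].
  intros v Hv; apply Hf; unfold u in Hv; lra.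
Qed.

Lemma Rabs_potential_le x t a : 0 < a <= t -> Rabs (2 * cos x / t ^ 2) <= 2 / a ^ 2.
Proof.
  intros Ha. pose proof (COS_bound x).
  assert (Ht2 : 0 < a ^ 2 <= t ^ 2) by (split; nra).
  pose proof (div_le_div_l 2 (t ^ 2) (a ^ 2) ltac:(lra) Ht2).
  replace (2 * cos x / t ^ 2) with (cos x * (2 / t ^ 2)) by (field; lra).
  assert (0 < 2 / t ^ 2) by (apply Rdiv_lt_0_compat; lra).
  apply Rabs_le; split; nra.
Qed.

Section FirstZero.

Variables (f W : R -> R) (s lam z : R).

Let V t := 2 * cos (2 * f t) / t ^ 2.
Let G t := s * t * Derive f t.
Let wronskian t := rho t * (G t * Derive W t - W t * Derive G t).

Hypothesis s_neq0 : s <> 0.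
Hypothesis f_derivable : forall t, 0 < t -> ex_derive f t.
Hypothesis f_cvg_0 : filterlim f (at_right 0) (locally 0).
Hypothesis G_sl : sl_solution (fun t => V t + 1) G.
Hypothesis G_ge0 : forall t, 0 < t -> 0 <= G t.
Hypothesis G_bounded : bounded_near_0 G.
Hypothesis dG_bounded : bounded_near_0 (Derive G).
Hypothesis W_sl : sl_solution (fun t => V t - lam) W.
Hypothesis W_init : init_cond W.
Hypothesis lam_le : lam <= -1.
Hypothesis z_gt0 : 0 < z.
Hypothesis W_z : W z = 0.
Hypothesis W_gt0 : forall t, 0 < t < z -> 0 < W t.

Lemma W_ge0 t : 0 < t <= z -> 0 <= W t.
Proof.
  intros Ht. destruct (Req_dec t z) as [->|]; [rewrite W_z; lra|].
  apply Rlt_le, W_gt0; lra.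
Qed.

Lemma W_derive t : 0 < t -> is_derive W t (Derive W t).
Proof. intros Ht. apply Derive_correct, (W_sl t Ht). Qed.

Lemma G_derive t : 0 < t -> is_derive G t (Derive G t).
Proof. intros Ht. apply Derive_correct, (G_sl t Ht). Qed.

Lemma dW_z_le0 : Derive W z <= 0.
Proof.
  apply (is_derive_le0_of_left_min W z _ z z_gt0 (W_derive z z_gt0)).
  intros t Ht. rewrite W_z. apply W_ge0. lra.
Qed.

Lemma is_derive_wronskian t : 0 < t -> is_derive wronskian t (rho t * (- lam - 1) * G t * W t).
Proof.
  intros Ht. replace (rho t * (- lam - 1) * G t * W t)
    with (rho t * ((V t - lam) - (V t + 1)) * G t * W t) by ring.
  exact (is_derive_sl_wronskian _ _ G W t G_sl W_sl Ht).
Qed.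

Lemma wronskian_rate_ge0 t : 0 < t <= z -> 0 <= rho t * (- lam - 1) * G t * W t.
Proof.
  intros Ht. pose proof (rho_pos t ltac:(lra)); pose proof (G_ge0 t ltac:(lra)).
  pose proof (W_ge0 t Ht).
  apply Rmult_le_pos; [|assumption]. apply Rmult_le_pos; [|assumption].
  apply Rmult_le_pos; lra.
Qed.

Lemma wronskian_flux_small_near_0 eps eta :
  0 < eps -> 0 < eta ->
  exists xi, 0 < xi < eta /\ Rabs (wronskian xi) < eps /\ Rabs (rho xi * Derive W xi) < eps.
Proof.
  intros Heps Heta.
  destruct G_bounded as [M1 [d1 [Hd1 HM1]]]; destruct dG_bounded as [M2 [d2 [Hd2 HM2]]].
  set (K := 3 * Rabs M1 + 2 * Rabs M2 + 3).
  pose proof (Rabs_pos M1); pose proof (Rabs_pos M2).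
  assert (HK : 0 < K) by (unfold K; lra).
  set (e := Rmin (Rmin eta 1) (Rmin (Rmin d1 d2) (eps / K))).
  assert (He : 0 < e).
  { unfold e. repeat apply Rmin_glb_lt; try lra. apply Rdiv_lt_0_compat; lra. }
  destruct (init_cond_slope_points W W_init (fun t Ht => proj1 (W_sl t Ht)) e He)
    as [xi [[Hxi0 Hxie] [HWxi HdWxi]]].
  unfold e in Hxie.
  apply Rmin_Rgt in Hxie as [[Hxi1 Hxi2]%Rmin_Rgt [[Hxi3 Hxi4]%Rmin_Rgt Hxi5]%Rmin_Rgt].
  assert (HxiK : xi * K < eps).
  { apply (Rmult_lt_compat_r K) in Hxi5; [|lra]. unfold Rdiv in Hxi5.
    rewrite Rmult_assoc, Rinv_l, Rmult_1_r in Hxi5; lra. }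
  pose proof (rho_le_sqr xi); pose proof (rho_pos xi Hxi0).
  assert (HG : Rabs (G xi) <= Rabs M1) by (eapply Rle_trans; [apply HM1; lra|apply Rle_abs]).
  assert (HdG : Rabs (Derive G xi) <= Rabs M2)
    by (eapply Rle_trans; [apply HM2; lra|apply Rle_abs]).
  pose proof (Rabs_pos (G xi)); pose proof (Rabs_pos (Derive G xi)).
  pose proof (Rabs_pos (W xi)); pose proof (Rabs_pos (Derive W xi)).
  assert (Hcross : Rabs (G xi * Derive W xi - W xi * Derive G xi) <= 3 * Rabs M1 + 2 * Rabs M2).
  { unfold Rminus. eapply Rle_trans; [apply Rabs_triang|].
    rewrite Rabs_Ropp, !Rabs_mult.
    assert (Rabs (G xi) * Rabs (Derive W xi) <= Rabs M1 * 3) by (apply Rmult_le_compat; lra).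
    assert (Rabs (W xi) * Rabs (Derive G xi) <= 2 * Rabs M2) by (apply Rmult_le_compat; lra).
    lra. }
  exists xi; split; [lra|split]; unfold wronskian; rewrite Rabs_mult, (Rabs_right (rho xi)) by lra.
  - assert (rho xi * Rabs (G xi * Derive W xi - W xi * Derive G xi)
            <= xi * (3 * Rabs M1 + 2 * Rabs M2)).
    { apply Rmult_le_compat; try lra. apply Rabs_pos. nra. }
    unfold K in HxiK. nra.
  - assert (rho xi * Rabs (Derive W xi) <= xi * 3) by (apply Rmult_le_compat; nra).
    unfold K in HxiK. nra.
Qed.

Lemma wronskian_ge0 t : 0 < t <= z -> 0 <= wronskian t.
Proof.
  apply (ge0_of_nondecreasing_near_0 wronskian (fun t => rho t * (- lam - 1) * G t * W t) z).
  - intros u Hu; apply is_derive_wronskian; lra.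
  - exact wronskian_rate_ge0.
  - intros eps eta Heps Heta.
    destruct (wronskian_flux_small_near_0 eps eta Heps Heta) as [xi [Hxi [Hh _]]].
    exists xi; split; assumption.
Qed.

Lemma wronskian_eq0 t : 0 < t <= z -> wronskian t = 0.
Proof.
  intros Ht. apply Rle_antisym; [|exact (wronskian_ge0 t Ht)].
  assert (Hhz : wronskian z <= 0).
  { unfold wronskian. rewrite W_z, Rmult_0_l, Rminus_0_r.
    pose proof (rho_pos z z_gt0); pose proof (G_ge0 z z_gt0); pose proof dW_z_le0.
    assert (0 <= rho z * G z) by (apply Rmult_le_pos; lra). nra. }
  enough (wronskian t <= wronskian z) by lra.
  apply (nondecreasing_of_derive_ge0 wronskian (fun t => rho t * (- lam - 1) * G t * W t));
    [lra| |].
  - intros u Hu; apply is_derive_wronskian; lra.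
  - intros u Hu; apply wronskian_rate_ge0; lra.
Qed.

Lemma G_proportional_W t : 0 < t < z -> G t = G (z / 2) / W (z / 2) * W t.
Proof.
  intros Ht.
  assert (Hratio : forall u, 0 < u < z -> is_derive (fun v => G v / W v) u 0).
  { intros u Hu. pose proof (W_gt0 u Hu).
    replace 0 with ((Derive G u * W u - G u * Derive W u) / W u ^ 2).
    - apply (is_derive_div G W); [apply G_derive|apply W_derive|]; lra.
    - pose proof (wronskian_eq0 u ltac:(lra)) as Hh. unfold wronskian in Hh.
      apply Rmult_integral in Hh as [Hrho|Hh]; [pose proof (rho_pos u ltac:(lra)); lra|].
      replace (Derive G u * W u - G u * Derive W u) with 0 by lra. field. lra. }
  assert (Heq : G t / W t = G (z / 2) / W (z / 2)).
  { destruct (Rle_or_lt t (z / 2)).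
    - apply (eq_of_derive_0 (fun v => G v / W v)); [lra|]. intros u Hu; apply Hratio; lra.
    - symmetry; apply (eq_of_derive_0 (fun v => G v / W v)); [lra|].
      intros u Hu; apply Hratio; lra. }
  rewrite <- Heq. field. pose proof (W_gt0 t Ht); lra.
Qed.

Lemma dW_z_lt0 : Derive W z < 0.
Proof.
  destruct (Rle_lt_or_eq_dec _ _ dW_z_le0) as [|HdWz]; [assumption|exfalso].
  assert (HWz2 : W (z / 2) = 0).
  { apply (sl_solution_backward_uniqueness _ W (z / 2) z (2 / (z / 2) ^ 2 + Rabs lam) W_sl);
      [lra| |exact W_z|exact HdWz].
    intros t Ht. unfold V, Rminus. eapply Rle_trans; [apply Rabs_triang|]. rewrite Rabs_Ropp.
    pose proof (Rabs_potential_le (2 * f t) t (z / 2) ltac:(lra)). lra. }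
  pose proof (W_gt0 (z / 2) ltac:(lra)). lra.
Qed.

Lemma G_z : G z = 0.
Proof.
  pose proof (wronskian_eq0 z ltac:(lra)) as Hh. unfold wronskian in Hh. rewrite W_z in Hh.
  pose proof (rho_pos z z_gt0); pose proof dW_z_lt0.
  replace (rho z * (G z * Derive W z - 0 * Derive G z)) with (G z * (rho z * Derive W z)) in Hh
    by ring.
  apply Rmult_integral in Hh as [|Hh]; [assumption|].
  apply Rmult_integral in Hh as [|]; lra.
Qed.

Lemma dG_z : Derive G z = 0.
Proof.
  pose proof (proj1 (is_derive_Reals G z _) (G_derive z z_gt0)) as Hlim.
  apply (deriv_minimum G 0 (2 * z) z (exist _ _ Hlim)); try lra.
  intros t Ht _. rewrite G_z. apply G_ge0; lra.
Qed.

Lemma G_eq0 t : 0 < t < z -> G t = 0.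
Proof.
  intros Ht. set (c := G (z / 2) / W (z / 2)).
  assert (Hk : is_derive (fun u => G u - c * W u) z (Derive G z - c * Derive W z)).
  { apply (is_derive_minus G (fun u => c * W u)); [apply G_derive, z_gt0|].
    apply (is_derive_scal W z c), W_derive, z_gt0. }
  assert (Hflat : forall u, z - z < u < z -> G u - c * W u = G z - c * W z).
  { intros u Hu. rewrite G_z, W_z, (G_proportional_W u) by lra. fold c. ring. }
  assert (Hc : c * Derive W z = 0).
  { pose proof (is_derive_ge0_of_left_max _ z _ z z_gt0 Hk
      ltac:(intros u Hu; cbv beta; rewrite (Hflat u Hu); lra)).
    pose proof (is_derive_le0_of_left_min _ z _ z z_gt0 Hk
      ltac:(intros u Hu; cbv beta; rewrite (Hflat u Hu); lra)).
    rewrite dG_z in *. lra. }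
  apply Rmult_integral in Hc as [Hc0|]; [|pose proof dW_z_lt0; lra].
  rewrite G_proportional_W by lra. fold c. rewrite Hc0. ring.
Qed.

Lemma f_eq0 t : 0 < t < z -> f t = 0.
Proof.
  apply (eq0_of_derive_eq0_near_0 f z); [|exact f_cvg_0].
  intros u Hu. replace 0 with (Derive f u).
  - apply Derive_correct, f_derivable; lra.
  - pose proof (G_eq0 u Hu) as HG. unfold G in HG.
    apply Rmult_integral in HG as [HG|]; [|assumption].
    apply Rmult_integral in HG as [|]; lra.
Qed.

Lemma no_first_zero : False.
Proof.
  set (Q := fun t => rho t * Derive W t).
  assert (HQ : forall t, 0 < t <= z -> is_derive Q t (rho t * (2 / t ^ 2 - lam) * W t)).
  { intros t Ht. destruct (W_sl t ltac:(lra)) as [_ HdQ].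
    replace (rho t * (2 / t ^ 2 - lam) * W t) with (rho t * (V t - lam) * W t); [exact HdQ|].
    destruct (Req_dec t z) as [->|Htz]; [rewrite W_z; ring|].
    unfold V. rewrite f_eq0, Rmult_0_r, cos_0 by lra. field. lra. }
  assert (HQz : 0 <= Q z).
  { apply (ge0_of_nondecreasing_near_0 Q _ z HQ); [| |lra].
    - intros t Ht. pose proof (rho_pos t ltac:(lra)); pose proof (W_ge0 t Ht).
      assert (0 < 2 / t ^ 2) by (apply Rdiv_lt_0_compat; nra).
      apply Rmult_le_pos; [|assumption]. apply Rmult_le_pos; lra.
    - intros eps eta Heps Heta.
      destruct (wronskian_flux_small_near_0 eps eta Heps Heta) as [xi [Hxi [_ HQxi]]].
      exists xi; split; assumption. }
  unfold Q in HQz. pose proof (rho_pos z z_gt0); pose proof dW_z_lt0. nra.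
Qed.

End FirstZero.

Theorem lemma4 (f0 : R -> R) (lam : R) (W : R -> R) :
  smooth_closed_halfline f0 ->
  monotone_halfline f0 ->
  profile_solution f0 ->
  norm_diff_le f0 f0_tilde (5 / 10000) ->
  eigen_ode f0 lam W ->
  init_cond W ->
  lam <= -1 ->
  forall y, 0 < y -> W y <> 0.
Proof.
  intros [f_smooth [f_derive_lim f_cont]] f_mono [f_ode [f_0 _]] _ W_eigen W_init lam_le
    y y_gt0 W_y.
  assert (f_derivable : forall t, 0 < t -> ex_derive f0 t /\ ex_derive (Derive f0) t)
    by (intros t Ht; exact (conj (f_smooth 1%nat t Ht) (f_smooth 2%nat t Ht))).
  destruct (monotone_derive_sign f0 f_mono (fun t Ht => proj1 (f_derivable t Ht)))
    as [s [s_neq0 s_f1]].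
  destruct (f_derive_lim 1%nat) as [l1 Hl1]; destruct (f_derive_lim 2%nat) as [l2 Hl2].
  destruct (scaling_bounded_near_0 f0 s (fun t Ht => proj2 (f_derivable t Ht))
    (bounded_near_0_of_lim _ _ Hl1) (bounded_near_0_of_lim _ _ Hl2)) as [G_bd dG_bd].
  pose proof (eigen_ode_sl_solution _ _ _ W_eigen) as W_sl.
  destruct (init_cond_sandwich W W_init) as [d [d_gt0 W_near]].
  destruct (first_zero W d y) as [z [z_range [W_z W_gt0]]]; try lra.
  - intros t Ht. apply (ex_derive_continuous (K := R_AbsRing) (V := R_NormedModule)), (W_sl t Ht).
  - intros t Ht. specialize (W_near t Ht). lra.
  - apply (no_first_zero f0 W s lam z); try assumption; try lra.
    + intros t Ht; apply f_derivable, Ht.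
    + rewrite f_0 in f_cont; exact f_cont.
    + apply scaling_sl_solution; [exact f_derivable|exact f_ode].
    + intros t Ht. specialize (s_f1 t Ht).
      replace (s * t * Derive f0 t) with (t * (s * Derive f0 t)) by ring.
      apply Rmult_le_pos; lra.
Qed.
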